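(* The halved Farey graph $\check F$ contains the Farey graph as a minor with finite branch sets.
   Context: Graphs are simple and may be infinite. The halved Farey graph of order $0$, $\check F_0$, is a $K^2$ whose single edge is coloured blue. Inductively, $\check F_{n+1}$ is the edge-coloured graph obtained from $\check F_n$ by adding, for every blue edge $e$ of $\check F_n$, a new vertex $v_e$ joined precisely to the two endvertices of $e$ by two blue edges, and recolouring all edges of $\check F_n\subseteq \check F_{n+1}$ black. The halved Farey graph is $\check F:=\bigcup_{n\in\mathbb{N}}\check F_n$ (forgetting colours). The Farey graph is the graph with vertex set $\mathbb{Q}\cup\{\infty\}$ in which two rationals $a/b$ and $c/d$ written in lowest terms (allowing $\infty=(\pm1)/0$) are adjacent if and only if $ad-bc=\pm1$; equivalently (up to isomorphism) it is the union $G_1\cup G_2$ of two copies $G_1,G_2$ of $\check F$ with $G_1\cap G_2=\check F_0$. A graph $H$ is a minor of $G$ if there are pairwise disjoint non-empty vertex sets $V_h\subseteq V(G)$ ($h\in V(H)$), each inducing a connected subgraph of $G$ (the branch sets), such that for every edge $hh'$ of $H$ there is an edge of $G$ between $V_h$ and $V_{h'}$. *)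

From mathcomp Require Import all_boot all_algebra.
From Stdlib Require List.
Set Implicit Arguments. Unset Strict Implicit. Unset Printing Implicit Defensive.
Import GRing.Theory Num.Theory.

Definition finite_set (V : Type) (B : V -> Prop) : Prop :=
  exists s : list V, forall x, B x -> List.In x s.

Inductive walk_in (V : Type) (adj : V -> V -> Prop) (B : V -> Prop) : V -> V -> Prop :=
| walk_refl x : B x -> walk_in adj B x x
| walk_step x y z : B x -> adj x y -> walk_in adj B y z -> walk_in adj B x z.

Definition connected_in (V : Type) (adj : V -> V -> Prop) (B : V -> Prop) : Prop :=
  forall x y, B x -> B y -> walk_in adj B x y.

Definition minor_finite_branch (VH : Type) (adjH : VH -> VH -> Prop)
    (VG : Type) (adjG : VG -> VG -> Prop) : Prop :=
  exists branch : VH -> VG -> Prop,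
    [/\ (forall h, exists x, branch h x),
        (forall h, finite_set (branch h)),
        (forall h h' x, h <> h' -> branch h x -> branch h' x -> False),
        (forall h, connected_in adjG (branch h)) &
        (forall h h', adjH h h' ->
           exists x y, [/\ branch h x, branch h' y & adjG x y])].

(* Vertices: Q ∪ {∞}, with None = ∞ = 1/0.  For rationals in lowest terms
   a/b, c/d (denq > 0), adjacency iff ad - bc = ±1; ∞ = 1/0 is adjacent to
   c/d iff d = ±1. *)
Local Open Scope ring_scope.
Definition farey_det (p q : option rat) : int :=
  match p, q with
  | None, None => 0
  | None, Some q => denq q
  | Some p, None => - denq p
  | Some p, Some q => numq p * denq q - denq p * numq q
  end.

Definition farey_adj (p q : option rat) : Prop :=
  farey_det p q = 1 \/ farey_det p q = -1.
Local Close Scope ring_scope.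

(* Vertices: the two vertices of F_0 (hbase false, hbase true), and one vertex
   hmid w for each blue edge ever created, blue edges being indexed by binary
   words w (most recent choice first): the initial edge is [::], and the blue
   edge w with new vertex v_w = hmid w gives rise to the two new blue edges
   (false :: w) = {x, v_w} and (true :: w) = {v_w, y}, where w = {x, y}. *)
Inductive hvert : Type :=
| hbase of bool
| hmid of seq bool.

Fixpoint hends (w : seq bool) : hvert * hvert :=
  match w with
  | [::] => (hbase false, hbase true)
  | c :: w' => let (x, y) := hends w' in
               if c then (hmid w', y) else (x, hmid w')
  end.

(* Every edge of the halved Farey graph was blue at the stage it was added,
   so the edge set of F̌ = ⋃ F̌_n is exactly { hends w }. *)
Definition hfarey_adj (u v : hvert) : Prop :=
  exists w : seq bool, hends w = (u, v) \/ hends w = (v, u).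

From mathcomp Require Import all_boot all_order all_algebra zify ring.
Set Implicit Arguments. Unset Strict Implicit. Unset Printing Implicit Defensive.
Import Order.TTheory GRing.Theory Num.Theory.

(* Label the two base vertices of F̌ by 0 = (0, 1) and ∞ = (1, 0), and each new
   vertex by the sum of the labels of the ends of its parent edge.  This
   Stern–Brocot labelling identifies F̌ with the Farey graph on the nonnegative
   rationals and ∞: labels are distinct coprime pairs, every coprime pair
   occurs, and every unimodular pair of labels is the pair of ends of an edge.
   The Farey graph is the union of its nonnegative and nonpositive halves,
   which meet in the edge {0, ∞}.  Below every blue edge F̌ contains a copy of
   itself; with v the first new vertex, the copy below {hmid [:: false], v}
   realises the nonnegative half and the mirrored copy below {v, hbase true}
   the nonpositive half, both with v as ∞.  Their two vertices playing 0 are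
   joined through hbase false, and these three vertices form the branch set
   of 0; every other branch set is a single vertex. *)

Section Walks.
Variables (V : Type) (adj : V -> V -> Prop) (B : V -> Prop).

Lemma walk_in_trans x y z : walk_in adj B x y -> walk_in adj B y z -> walk_in adj B x z.
Proof. by elim=> [//|u v w Bu huv _ IH] /IH; apply: walk_step. Qed.

Lemma connected_in_subsingleton :
  (forall x y, B x -> B y -> x = y) -> connected_in adj B.
Proof. by move=> B1 x y Bx /(B1 _ _ Bx) <-; apply: walk_refl. Qed.

Lemma connected_in_hub c : B c ->
  (forall x, B x -> x = c \/ adj c x /\ adj x c) -> connected_in adj B.
Proof.
move=> Bc hub.
have to_c x : B x -> walk_in adj B x c.
  move=> Bx; case: (hub x Bx) => [->|[_ hxc]]; first exact: walk_refl.
  exact: walk_step Bx hxc (walk_refl _ Bc).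
have from_c x : B x -> walk_in adj B c x.
  move=> Bx; case: (hub x Bx) => [->|[hcx _]]; first exact: walk_refl.
  exact: walk_step Bc hcx (walk_refl _ Bx).
by move=> x y Bx By; apply: walk_in_trans (to_c x Bx) (from_c y By).
Qed.

End Walks.

Lemma hfarey_adj_sym u v : hfarey_adj u v -> hfarey_adj v u.
Proof. by case=> w [e|e]; exists w; [right|left]. Qed.

(* The copy of F̌ below the blue edge [s], whose base edge is [hends s]. *)
Definition hsub (s : seq bool) (u : hvert) : hvert :=
  match u with
  | hbase b => if b then (hends s).2 else (hends s).1
  | hmid w => hmid (w ++ s)
  end.

Lemma hends_cat w s : hends (w ++ s) = (hsub s (hends w).1, hsub s (hends w).2).
Proof.
elim: w => [|c w IH] /=; first by case: (hends s).
by rewrite IH; case: (hends w) => x y; case: c.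
Qed.

Lemma hfarey_adj_hsub s u v : hfarey_adj u v -> hfarey_adj (hsub s u) (hsub s v).
Proof. by case=> w [e|e]; exists (w ++ s); rewrite hends_cat e; [left|right]. Qed.

Definition hmirror (u : hvert) : hvert :=
  match u with
  | hbase b => hbase (~~ b)
  | hmid w => hmid (map negb w)
  end.

Lemma hends_mirror w : hends (map negb w) = (hmirror (hends w).2, hmirror (hends w).1).
Proof. by elim: w => [|c w IH] //=; rewrite IH; case: (hends w) => x y; case: c. Qed.

Lemma hfarey_adj_mirror u v : hfarey_adj u v -> hfarey_adj (hmirror u) (hmirror v).
Proof. by case=> w [e|e]; exists (map negb w); rewrite hends_mirror e; [right|left]. Qed.

Definition vadd (x y : nat * nat) : nat * nat := (x.1 + y.1, x.2 + y.2).

Definition sb_step (c : bool) (e : (nat * nat) * (nat * nat)) : (nat * nat) * (nat * nat) :=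
  if c then (vadd e.1 e.2, e.2) else (e.1, vadd e.1 e.2).

Definition sb_ends (w : seq bool) : (nat * nat) * (nat * nat) := foldr sb_step ((0, 1), (1, 0)) w.

Definition sb_mid (w : seq bool) : nat * nat := vadd (sb_ends w).1 (sb_ends w).2.

Definition sb_vec (u : hvert) : nat * nat :=
  match u with
  | hbase b => if b then (1, 0) else (0, 1)
  | hmid w => sb_mid w
  end.

Lemma sb_ends_hends w : sb_ends w = (sb_vec (hends w).1, sb_vec (hends w).2).
Proof.
elim: w => [//|c w IH]; rewrite [sb_ends _]/= -/(sb_ends w) [hends _]/= IH.
by case E: (hends w) => [x y]; case: c; rewrite /= /sb_mid IH E.
Qed.

Lemma foldr_sb_step_morph (f : nat * nat -> nat * nat) L R w :
  {morph f : x y / vadd x y} ->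
  foldr sb_step (f L, f R) w =
    (f (foldr sb_step (L, R) w).1, f (foldr sb_step (L, R) w).2).
Proof.
move=> fD; elim: w => [//|c w /= ->].
by case: c; rewrite /sb_step /= fD.
Qed.

Definition sb_child (c : bool) (x : nat * nat) : nat * nat :=
  if c then (x.1 + x.2, x.2) else (x.1, x.1 + x.2).

Lemma sb_childD c : {morph sb_child c : x y / vadd x y}.
Proof. by move=> [a b] [a' b']; case: c; rewrite /sb_child /vadd /=; congr pair; lia. Qed.

Lemma sb_mid_rcons w c : sb_mid (rcons w c) = sb_child c (sb_mid w).
Proof.
have base : sb_step c ((0, 1), (1, 0)) = (sb_child c (0, 1), sb_child c (1, 0)).
  by case: c.
rewrite /sb_mid /sb_ends foldr_rcons base.
by rewrite (foldr_sb_step_morph _ _ _ (sb_childD c)) sb_childD.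
Qed.

Lemma sb_mid_pos w : 0 < (sb_mid w).1 /\ 0 < (sb_mid w).2.
Proof.
elim/last_ind: w => [//|w c]; rewrite sb_mid_rcons.
by case: (sb_mid w) => a b; case: c => /=; lia.
Qed.

Lemma sb_mid_coprime w : coprime (sb_mid w).1 (sb_mid w).2.
Proof.
elim/last_ind: w => [//|w c]; rewrite sb_mid_rcons /coprime.
by case: (sb_mid w) => a b; case: c => /= cop; rewrite ?gcdnDl // gcdnC gcdnDr gcdnC.
Qed.

Lemma sb_child_inj c : injective (sb_child c).
Proof. by move=> [a b] [a' b']; case: c => -[] /= ? ?; congr pair; lia. Qed.

Lemma sb_child_ltn c x : 0 < x.1 -> 0 < x.2 -> ((sb_child c x).1 < (sb_child c x).2) = ~~ c.
Proof. by case: x c => a b [] /= ? ?; apply/idP/idP; lia. Qed.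

Lemma sb_mid_child_neq w c : sb_child c (sb_mid w) <> (1, 1).
Proof. by case: (sb_mid_pos w); case: (sb_mid w) => a b; case: c => /= ? ? [] ? ?; lia. Qed.

Lemma sb_mid_inj : injective sb_mid.
Proof.
elim/last_ind=> [|w c IH] w'; case/lastP: w' => [//|w' c']; rewrite ?sb_mid_rcons.
- by move/esym/sb_mid_child_neq.
- by move/sb_mid_child_neq.
have [[p1 p2] [p1' p2']] := (sb_mid_pos w, sb_mid_pos w').
move=> e; have ec : c = c'.
  by apply: negb_inj; rewrite -(sb_child_ltn c p1 p2) -(sb_child_ltn c' p1' p2') e.
by move: e; rewrite ec => /sb_child_inj /IH ->.
Qed.

Lemma sb_mid_surj p q : 0 < p -> 0 < q -> coprime p q -> exists w, sb_mid w = (p, q).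
Proof.
have [n] := ubnP (p + q); elim: n => // n IH in p q *.
move=> lt_n p_gt0 q_gt0 cop.
case: (ltngtP p q) => [lt_pq|lt_qp|eq_pq].
- have cop' : coprime p (q - p) by rewrite /coprime -gcdnDl subnKC 1?ltnW.
  have [||w e] := IH p (q - p) _ p_gt0 _ cop'; [lia|lia|].
  by exists (rcons w false); rewrite sb_mid_rcons e /=; congr pair; lia.
- have cop' : coprime (p - q) q by rewrite /coprime gcdnC -gcdnDl subnKC 1?ltnW // gcdnC.
  have [||w e] := IH (p - q) q _ _ q_gt0 cop'; [lia|lia|].
  by exists (rcons w true); rewrite sb_mid_rcons e /=; congr pair; lia.
- by move: cop; rewrite -eq_pq /coprime gcdnn => /eqP->; exists [::].
Qed.

Lemma unimodular_cases a b c d : b * c = a * d + 1 ->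
  [\/ (a, b, c, d) = (0, 1, 1, 0), c <= a /\ d <= b | a <= c /\ b <= d].
Proof.
move=> det; case: (leqP c a) => ca; case: (leqP d b) => db.
- by constructor 2.
- by exfalso; nia.
- case: (leqP b d) => bd; first by constructor 3; split; lia.
  have [a0 d0] : a = 0 /\ d = 0 by nia.
  move: det; rewrite a0 d0 muln0 => /eqP; rewrite muln_eq1 => /andP[/eqP-> /eqP->].
  by constructor 1.
- by constructor 3; split; lia.
Qed.

Lemma sb_ends_surj L R : L.2 * R.1 = L.1 * R.2 + 1 -> exists w, sb_ends w = (L, R).
Proof.
case: L R => a b [c d] /=.
have [n] := ubnP (a + b + c + d); elim: n => // n IH in a b c d *.
move=> lt_n det; case: (unimodular_cases det) => [[-> -> -> ->]|[ca db]|[ac bd]].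
- by exists [::].
- have c_gt0 : 0 < c by case: c det {ca lt_n}; rewrite ?muln0 //; lia.
  have [||w e] := IH (a - c) (b - d) c d; first lia.
    by move: (leq_mul ca (leqnn d)) (leq_mul db (leqnn c)); rewrite !mulnBl (mulnC d c); lia.
  exists (true :: w); rewrite /= -/(sb_ends w) e /sb_step /vadd /=.
  by congr (pair (pair _ _) _); lia.
- have b_gt0 : 0 < b by case: b det {bd lt_n}; rewrite ?mul0n //; lia.
  have [||w e] := IH a b (c - a) (d - b); first lia.
    by move: (leq_mul (leqnn b) ac) (leq_mul (leqnn a) bd); rewrite !mulnBr (mulnC b a); lia.
  exists (false :: w); rewrite /= -/(sb_ends w) e /sb_step /vadd /=.
  by congr (pair _ (pair _ _)); lia.
Qed.

Local Open Scope ring_scope.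

Definition farey_of_vec (x : nat * nat) : option rat :=
  if x.2 == 0%N then None else Some (x.1%:R / x.2%:R).

Definition vec_of_farey (h : option rat) : nat * nat :=
  if h is Some r then (`|numq r|, `|denq r|)%N else (1, 0)%N.

Definition farey_nonneg (h : option rat) : Prop := if h is Some r then 0 <= r else True.

Definition farey_opp (h : option rat) : option rat := omap -%R h.

Lemma farey_of_vec_nonneg x : farey_nonneg (farey_of_vec x).
Proof. by rewrite /farey_of_vec; case: eqP => //= _; rewrite divr_ge0. Qed.

Lemma farey_of_vecK x : coprime x.1 x.2 -> vec_of_farey (farey_of_vec x) = x.
Proof.
case: x => p q /=; rewrite /farey_of_vec /=; case: eqP => [->|/eqP q_neq0] cop.
  by move: cop; rewrite /coprime gcdn0 => /eqP->.
have cop' : coprime `|p%:Z| `|q%:Z| by [].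
rewrite /= !pmulrn (coprimeq_num cop') (coprimeq_den cop') eqz_nat (negbTE q_neq0).
by rewrite gtr0_sg ?ltz_nat ?lt0n // mul1r.
Qed.

Lemma vec_of_fareyK h : farey_nonneg h -> farey_of_vec (vec_of_farey h) = h.
Proof.
case: h => [r|//] /= r_ge0; rewrite /farey_of_vec /= absz_eq0 (negbTE (denq_neq0 r)).
by rewrite !natr_absz !ger0_norm ?numq_ge0 // divq_num_den.
Qed.

Lemma vec_of_farey_coprime h : coprime (vec_of_farey h).1 (vec_of_farey h).2.
Proof. by case: h => [r|] //=; apply: coprime_num_den. Qed.

Lemma farey_det_vec h h' : farey_nonneg h -> farey_nonneg h' ->
  farey_det h h' =
    ((vec_of_farey h).1 * (vec_of_farey h').2)%N%:Z
    - ((vec_of_farey h).2 * (vec_of_farey h').1)%N%:Z.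
Proof.
case: h h' => [r|] [r'|] //= r_ge0 r'_ge0; rewrite ?PoszM !abszE;
  rewrite ?ger0_norm ?numq_ge0 ?(ltW (denq_gt0 _)) //; ring.
Qed.

Lemma farey_oppK : involutive farey_opp.
Proof. by case=> [r|] //=; rewrite opprK. Qed.

Lemma farey_adj_opp h h' : farey_adj h h' -> farey_adj (farey_opp h) (farey_opp h').
Proof.
rewrite /farey_adj; case: h h' => [r|] [r'|] //=; rewrite ?denqN // numqN numqN.
have -> : - numq r * denq r' - denq r * - numq r' = - (numq r * denq r' - denq r * numq r').
  by ring.
by case=> ->; [right|left]; rewrite ?opprK.
Qed.

Lemma farey_nonneg_total h : farey_nonneg h \/ farey_nonneg (farey_opp h).
Proof. by case: h => [r|] /=; [rewrite oppr_ge0; apply/orP; exact: le_total | left]. Qed.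

Lemma farey_nonneg_opp h h' : farey_nonneg h -> farey_nonneg h' -> h = farey_opp h' ->
  (h = None /\ h' = None) \/ (h = Some 0 /\ h' = Some 0).
Proof.
case: h h' => [r|] [r'|] //= r_ge0 r'_ge0 => [[e]|_]; last by left.
have r'0 : r' = 0 by apply/le_anti; rewrite r'_ge0 -oppr_ge0 -e r_ge0.
by right; rewrite e r'0 oppr0.
Qed.

Lemma farey_adj_sign h h' : farey_adj h h' ->
  (farey_nonneg h /\ farey_nonneg h') \/
  (farey_nonneg (farey_opp h) /\ farey_nonneg (farey_opp h')).
Proof.
case: h h' => [r|] [r'|] hadj.
- move: hadj; rewrite /farey_adj /= !oppr_ge0 -!numq_ge0 -!numq_le0.
  by move: (denq_gt0 r) (denq_gt0 r'); nia.
- by case: (farey_nonneg_total (Some r)); [left|right].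
- by case: (farey_nonneg_total (Some r')); [left|right].
- by left.
Qed.

Lemma sb_vec_coprime u : coprime (sb_vec u).1 (sb_vec u).2.
Proof. by case: u => [[]|w] //; apply: sb_mid_coprime. Qed.

Lemma sb_vec_inj : injective sb_vec.
Proof.
have base_neq b w : sb_vec (hbase b) <> sb_mid w.
  by case: (sb_mid_pos w); case: (sb_mid w) => p q; case: b => /= ? ? [] ? ?; lia.
case=> [b|w] [b'|w'] //=; first by case: b b' => -[].
- by move/base_neq.
- by move/esym/base_neq.
- by move/sb_mid_inj->.
Qed.

Lemma sb_vec_surj x : coprime x.1 x.2 -> exists u, sb_vec u = x.
Proof.
case: x => [[|p] [|q]] /= cop.
- by [].
- by exists (hbase false); move: cop; rewrite /coprime gcd0n => /eqP->.
- by exists (hbase true); move: cop; rewrite /coprime gcdn0 => /eqP->.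
- by have [w e] := sb_mid_surj (ltn0Sn p) (ltn0Sn q) cop; exists (hmid w).
Qed.

Definition sb_value (u : hvert) : option rat := farey_of_vec (sb_vec u).

Lemma sb_value_zero : sb_value (hbase false) = Some 0.
Proof. by rewrite /sb_value /farey_of_vec /= mul0r. Qed.

Lemma sb_value_infty : sb_value (hbase true) = None.
Proof. by []. Qed.

Lemma sb_value_nonneg u : farey_nonneg (sb_value u).
Proof. exact: farey_of_vec_nonneg. Qed.

Lemma sb_value_inj : injective sb_value.
Proof.
move=> u v /(congr1 vec_of_farey); rewrite !farey_of_vecK ?sb_vec_coprime //.
exact: sb_vec_inj.
Qed.

Lemma sb_value_surj h : farey_nonneg h -> exists u, sb_value u = h.
Proof.
move=> h_ge0; have [u e] := sb_vec_surj (vec_of_farey_coprime h).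
by exists u; rewrite /sb_value e vec_of_fareyK.
Qed.

Lemma sb_vec_adj_surj L R : L.2 * R.1 = L.1 * R.2 + 1 ->
  exists u v, [/\ hfarey_adj u v, sb_vec u = L & sb_vec v = R].
Proof.
move=> /sb_ends_surj [w]; rewrite sb_ends_hends => -[eL eR].
by exists (hends w).1, (hends w).2; split=> //; exists w; left; case: (hends w).
Qed.

Lemma farey_adj_lift h h' : farey_nonneg h -> farey_nonneg h' -> farey_adj h h' ->
  exists u v, [/\ hfarey_adj u v, sb_value u = h & sb_value v = h'].
Proof.
move=> h_ge0 h'_ge0; rewrite /farey_adj farey_det_vec //.
move: (vec_of_farey h) (vec_of_farey h') (vec_of_fareyK h_ge0) (vec_of_fareyK h'_ge0).
move=> [p q] [p' q'] /= <- <- [det|det].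
- have [v [u [vu <- <-]]] := @sb_vec_adj_surj (p', q') (p, q) ltac:(rewrite /=; lia).
  by exists u, v; split=> //; apply: hfarey_adj_sym.
- have [u [v [uv <- <-]]] := @sb_vec_adj_surj (p, q) (p', q') ltac:(rewrite /=; lia).
  by exists u, v.
Qed.

Definition hpos (u : hvert) : hvert := hsub [:: true; false] u.
Definition hneg (u : hvert) : hvert := hsub [:: true] (hmirror u).

(* [None] marks the vertices below the blue edge [:: false; false], which lie
   in no branch set. *)
Definition farey_branch (x : hvert) : option (option rat) :=
  match x with
  | hbase _ => Some (Some 0)
  | hmid w =>
    match rev w with
    | [::] => Some None
    | [:: false] => Some (Some 0)
    | false :: true :: v => Some (sb_value (hmid (rev v)))
    | true :: v => Some (farey_opp (sb_value (hmirror (hmid (rev v)))))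
    | false :: false :: _ => None
    end
  end.

Lemma farey_branch_hpos u : farey_branch (hpos u) = Some (sb_value u).
Proof.
by case: u => [[]|w] //=; rewrite rev_cat -[rev [:: _; _]]/[:: false; true] /= revK.
Qed.

Lemma farey_branch_hneg u : farey_branch (hneg u) = Some (farey_opp (sb_value u)).
Proof.
by case: u => [[]|w] //=; rewrite ?rev_cat -[rev [:: _]]/[:: true] /= ?revK ?(mapK negbK).
Qed.

Lemma farey_branch_cases x h : farey_branch x = Some h ->
  [\/ x = hbase false /\ h = Some 0,
      exists2 u, x = hpos u & sb_value u = h |
      exists2 u, x = hneg u & farey_opp (sb_value u) = h].
Proof.
case: x => [[]|w] /=.
- by move=> [<-]; constructor 3; exists (hbase false); rewrite // sb_value_zero /= oppr0.
- by move=> [<-]; constructor 1.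
move: (rev w) (revK w) => v <-; case: v => [|[] v] /=.
- by move=> [<-]; constructor 2; exists (hbase true).
- move=> [<-]; constructor 3; exists (hmirror (hmid (rev v))) => //.
  by rewrite /hneg /= (mapK negbK) rev_cons cats1.
- case: v => [|[] v] //= [<-]; constructor 2; first by exists (hbase false).
  by exists (hmid (rev v)); rewrite // /hpos /= !rev_cons -!cats1 -catA.
Qed.

Lemma hfarey_adj_hneg u v : hfarey_adj u v -> hfarey_adj (hneg u) (hneg v).
Proof. by move/hfarey_adj_mirror; apply: hfarey_adj_hsub. Qed.

Lemma hpos_eq_hneg u v : sb_value u = farey_opp (sb_value v) -> sb_value u <> Some 0 ->
  hpos u = hneg v.
Proof.
move=> e; have [[eu ev]|[-> //]] := farey_nonneg_opp (sb_value_nonneg u) (sb_value_nonneg v) e.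
by rewrite -sb_value_infty in eu ev; rewrite (sb_value_inj eu) (sb_value_inj ev).
Qed.

Lemma farey_branch_zero x : farey_branch x = Some (Some 0) ->
  [\/ x = hbase false, x = hbase true | x = hmid [:: false]].
Proof.
case/farey_branch_cases=> [[-> _]|[u -> eu]|[u -> /(congr1 farey_opp) eu]].
- by constructor 1.
- by rewrite -sb_value_zero in eu; rewrite (sb_value_inj eu); constructor 3.
- rewrite farey_oppK /= oppr0 -sb_value_zero in eu.
  by rewrite (sb_value_inj eu); constructor 2.
Qed.

Lemma farey_branch_nonzero h x y : h <> Some 0 ->
  farey_branch x = Some h -> farey_branch y = Some h -> x = y.
Proof.
move=> h0 /farey_branch_cases [[_ //]|[u -> eu]|[u -> eu]];
  case/farey_branch_cases=> [[_ //]|[v -> ev]|[v -> ev]].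
- by rewrite (@sb_value_inj u v) // eu ev.
- by apply: hpos_eq_hneg; rewrite ?eu // ev.
- by apply/esym/hpos_eq_hneg; rewrite ?ev // eu.
- by rewrite (@sb_value_inj u v) // (can_inj farey_oppK (etrans eu (esym ev))).
Qed.

Lemma farey_branch_surj h : exists x, farey_branch x = Some h.
Proof.
case: (farey_nonneg_total h) => /sb_value_surj [u eu].
- by exists (hpos u); rewrite farey_branch_hpos eu.
- by exists (hneg u); rewrite farey_branch_hneg eu farey_oppK.
Qed.

Lemma farey_branch_adj h h' : farey_adj h h' ->
  exists x y, [/\ farey_branch x = Some h, farey_branch y = Some h' & hfarey_adj x y].
Proof.
move=> hh'; case: (farey_adj_sign hh') => [[h_ge0 h'_ge0]|[h_le0 h'_le0]].
- have [u [v [uv <- <-]]] := farey_adj_lift h_ge0 h'_ge0 hh'.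
  exists (hpos u), (hpos v); rewrite !farey_branch_hpos.
  by split=> //; apply: hfarey_adj_hsub.
- have [u [v [uv eu ev]]] := farey_adj_lift h_le0 h'_le0 (farey_adj_opp hh').
  exists (hneg u), (hneg v); rewrite !farey_branch_hneg eu ev !farey_oppK.
  by split=> //; apply: hfarey_adj_hneg.
Qed.

Theorem lemma2p1 : minor_finite_branch farey_adj hfarey_adj.
Proof.
exists (fun h x => farey_branch x = Some h); split.
- exact: farey_branch_surj.
- move=> h; case: (eqVneq h (Some 0)) => [->|/eqP h0].
    exists [:: hbase false; hbase true; hmid [:: false]] => x.
    by case/farey_branch_zero=> ->; [left|right; left|right; right; left].
  have [x0 e0] := farey_branch_surj h.
  by exists [:: x0] => x ex; left; apply: farey_branch_nonzero h0 e0 ex.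
- by move=> h h' x hh' -> [/hh'].
- move=> h; case: (eqVneq h (Some 0)) => [->|/eqP h0].
    apply: (@connected_in_hub _ _ _ (hbase false)) => // x.
    case/farey_branch_zero=> ->; [by left|right..].
      by split; [exists [::]; left | exists [::]; right].
    by split; [exists [:: false; false]; left | exists [:: false; false]; right].
  by apply: connected_in_subsingleton => x y; apply: farey_branch_nonzero.
- exact: farey_branch_adj.
Qed.
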